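(* Let $p>3$ be a prime and $t\in\mathbb Z_p$. Then $$P_{\frac{p-1}2}(t)\equiv\sum_{k=0}^{\frac{p-1}2}\binom{2k}k^2\Big(\frac{1-t}{32}\Big)^k\equiv-\Big(\frac{-6}p\Big)\sum_{x=0}^{p-1}\Big(\frac{x^3-3(t^2+3)x+2t(t^2-9)}p\Big)\pmod p.$$
   Context: $\mathbb Z_p$ denotes the set of rational numbers whose denominator (in lowest terms) is prime to $p$; congruences are in this ring. For $a\in\mathbb Z_p$, $\big(\frac ap\big)$ is the Legendre symbol of the residue of $a$ modulo $p$ (equal to $0$ if $p\mid a$). $P_n(x)$ is the $n$-th Legendre polynomial, defined by $\frac1{\sqrt{1-2xt+t^2}}=\sum_{n\ge0}P_n(x)t^n$, equivalently $P_n(x)=\frac1{2^n}\sum_{k=0}^{[n/2]}\frac{(-1)^k(2n-2k)!}{k!(n-k)!(n-2k)!}x^{n-2k}$. *)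

From mathcomp Require Import all_boot all_order all_algebra.
Set Implicit Arguments. Unset Strict Implicit. Unset Printing Implicit Defensive.
Import Order.TTheory GRing.Theory Num.Theory.
Local Open Scope ring_scope.

(* Z_p : rationals whose denominator (in lowest terms) is prime to p. *)
Definition in_Zp (p : nat) (a : rat) : bool := coprime `|denq a|%N p.

Definition congp (p : nat) (a b : rat) : Prop := in_Zp p ((a - b) / p%:R).

Definition legendre_int (p : nat) (m : int) : int :=
  if (p%:Z %| m)%Z then 0
  else if [exists x : 'I_p, (p%:Z %| (x%:Z) ^+ 2 - m)%Z] then 1 else -1.

(* Legendre symbol of the residue mod p of a in Z_p: the residue of
   numq a / denq a is represented by numq a * denq a ^ (p-2). *)
Definition legendre (p : nat) (a : rat) : int :=
  legendre_int p (numq a * denq a ^+ (p - 2)%N).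

Definition legendreP (n : nat) (x : rat) : rat :=
  (2 ^+ n)^-1 * \sum_(0 <= k < n./2.+1)
    (-1) ^+ k * ((2 * n - 2 * k)`!)%:R
      / ((k`!)%:R * ((n - k)`!)%:R * ((n - 2 * k)`!)%:R) * x ^+ (n - 2 * k).

(* Everything is reduced to 'F_p, where Euler's criterion turns the Legendre
   symbols into [(p-1)/2]-th powers and, for [n = (p-1)/2], the power sums
   [sum_x x^j] vanish below [2(p-1)] except at [j = p - 1].  Hence the character
   sum of a cubic [x q(x)] is minus the [X^n]-coefficient of [q^n].  For
   [v ((v + t)^2 - 1)] that coefficient is [2^n P_n(t)]; the affine substitution
   [v = -2w + 1 - t] rescales this cubic to [-8 w (w - 1) (w - (1 - t)/2)], whose
   coefficient is [sum_k C(n,k)^2 ((1-t)/2)^k], and [C(n,k) (-4)^k = C(2k,k)] in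
   'F_p gives the central binomial sum.  The substitution [x = -3v - 2t] relates
   the cubic of the statement to [v ((v + t)^2 - 1)]. *)

From mathcomp Require Import all_boot all_order all_algebra all_field all_solvable.
From mathcomp Require Import ring zify.
Import Order.TTheory GRing.Theory Num.Theory.
Local Open Scope ring_scope.
Set Implicit Arguments. Unset Strict Implicit.

(* [2^n P_n(x)]: the explicit formula, with ['C(n, k) 'C(2n - 2k, n)] for
   [(2n - 2k)! / (k! (n - k)! (n - 2k)!)]. *)
Definition scaled_legendreP (R : nzRingType) n (x : R) :=
  \sum_(k < n.+1) (-1) ^+ k * ('C(n, k) * 'C(2 * n - 2 * k, n))%:R * x ^+ (n - 2 * k).

Definition binom_sqr_sum (R : nzRingType) n (x : R) := \sum_(k < n.+1) ('C(n, k) ^ 2)%:R * x ^+ k.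

Definition central_sqr_sum (R : nzRingType) n (x : R) :=
  \sum_(0 <= k < n.+1) ('C(2 * k, k) ^ 2)%:R * x ^+ k.

Definition cubic_of (R : nzRingType) (t x : R) :=
  x ^+ 3 - 3 * (t ^+ 2 + 3) * x + 2 * t * (t ^+ 2 - 9).

Lemma mul_bin_central k : (k.+1 * 'C(k.*2.+2, k.+1) = 2 * k.*2.+1 * 'C(k.*2, k))%N.
Proof.
apply/eqP; rewrite -(eqn_pmul2r (_ : 0 < k`! * (k.+1)`!)%N) ?muln_gt0 ?fact_gt0 //.
have fact_k := bin_fact (leq_addr k k); rewrite addnK addnn in fact_k.
have fact_Sk := bin_fact (leq_addr k.+1 k.+1); rewrite addnK addnn doubleS in fact_Sk.
rewrite !factS in fact_Sk *.
move: fact_k fact_Sk; generalize 'C(k.*2, k) 'C(k.*2.+2, k.+1) (k`!) (k.*2)`!.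
move=> b c a f *; apply/eqP; nia.
Qed.

Lemma bin_mul_bin_fact n k : (2 * k <= n)%N ->
  ('C(n, k) * 'C(2 * n - 2 * k, n) * (k`! * (n - k)`! * (n - 2 * k)`!) = (2 * n - 2 * k)`!)%N.
Proof.
move=> hk.
have fact_nk := @bin_fact n k ltac:(lia).
have fact_2n := @bin_fact (2 * n - 2 * k)%N n ltac:(lia).
rewrite (_ : 2 * n - 2 * k - n = n - 2 * k)%N in fact_2n; last by lia.
apply/eqP; rewrite -(eqn_pmul2r (fact_gt0 n)); apply/eqP.
rewrite -fact_2n -{2}fact_nk.
move: fact_nk fact_2n; generalize 'C(n, k) 'C(2 * n - 2 * k, n) (k`!) ((n - k)`!).
move=> a b c d *; nia.
Qed.

(* The terms with [n/2 < k <= n] vanish because ['C(2n - 2k, n) = 0] there. *)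
Lemma legendreP_scaled n (x : rat) : legendreP n x = (2 ^+ n)^-1 * scaled_legendreP n x.
Proof.
have half_le k : (k < n./2.+1)%N = (2 * k <= n)%N.
  have := odd_double_half n; have : (odd n <= 1)%N by case: odd.
  rewrite ltnS -mul2n; lia.
rewrite /legendreP /scaled_legendreP; congr (_ * _).
rewrite -(big_mkord xpredT
  (fun k => (-1) ^+ k * ('C(n, k) * 'C(2 * n - 2 * k, n))%:R * x ^+ (n - 2 * k))).
rewrite (@big_cat_nat _ _ _ n./2.+1 0 n.+1) //=; last by rewrite ltnS; lia.
rewrite [X in _ = _ + X]big1_seq ?addr0 => [|k /andP[_]]; last first.
  rewrite mem_index_iota => /andP[k_gt k_lt].
  have : ~~ (2 * k <= n)%N by rewrite -half_le -leqNgt.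
  by move=> ?; rewrite (@bin_small (2 * n - 2 * k)) ?muln0 ?mulr0 ?mul0r //; lia.
apply: eq_big_nat => k /andP[_]; rewrite half_le => hk.
have fact_neq0 : (k`! * (n - k)`! * (n - 2 * k)`!)%:R != 0 :> rat.
  by rewrite pnatr_eq0 -lt0n !muln_gt0 !fact_gt0.
rewrite -[(-1) ^+ k * _ / _]mulrA -(bin_mul_bin_fact hk) natrM.
have -> : k`!%:R * (n - k)`!%:R * (n - 2 * k)`!%:R =
          (k`! * (n - k)`! * (n - 2 * k)`!)%:R :> rat by rewrite !natrM.
by rewrite mulfK.
Qed.

Section PolyCoefficients.
Variable R : comNzRingType.

Lemma coef_XaddC_exp (c : R) m k : (('X + c%:P) ^+ m)`_k = c ^+ (m - k) *+ 'C(m, k).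
Proof.
rewrite addrC exprDn coef_sum.
under eq_bigr => i _ do
  rewrite coefMn -rmorphXn coefCM coefXn mulr_natr -mulrnA mulnC mulrnA mulrb eq_sym.
rewrite -big_mkcond (big_ord1_eq _ (fun i => c ^+ (m - i) *+ 'C(m, i))) ltnS.
case: leqP => // /bin_small ->.
by rewrite mulr0n.
Qed.

Lemma coef_XsubC_exp (c : R) m k : (('X - c%:P) ^+ m)`_k = (- c) ^+ (m - k) *+ 'C(m, k).
Proof. by rewrite -polyCN coef_XaddC_exp. Qed.

Lemma coef_XaddC_sqr_sub1_exp (T : R) n :
  ((('X + T%:P) ^+ 2 - 1) ^+ n)`_n = scaled_legendreP n T.
Proof.
rewrite exprDn coef_sum; apply: eq_bigr => k _.
have -> : (-1 : {poly R}) ^+ k = ((-1) ^+ k)%:P by rewrite rmorphXn rmorphN1.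
rewrite -exprM coefMn coefMC coef_XaddC_exp.
have twice_sub : (2 * n - n = n)%N by rewrite mul2n -addnn addnK.
rewrite mulnBr subnAC twice_sub -[T ^+ _ *+ _]mulr_natr -[_ * _ *+ _]mulr_natr natrM.
ring.
Qed.

Lemma coef_XsubC_XsubC_exp (l : R) n :
  ((('X - 1) * ('X - l%:P)) ^+ n)`_n = (-1) ^+ n * binom_sqr_sum n l.
Proof.
rewrite exprMn coefM big_distrr /=; apply: eq_bigr => j _.
have j_le : (j <= n)%N by rewrite -ltnS.
rewrite -polyC1 !coef_XsubC_exp subKn // bin_sub // (exprNn l).
have -> : (-1 : R) ^+ n = (-1) ^+ (n - j) * (-1) ^+ j by rewrite -exprD subnK.
rewrite -[(-1) ^+ _ *+ _]mulr_natr -[_ ^+ j * _ *+ _]mulr_natr natrX.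
ring.
Qed.

End PolyCoefficients.

Lemma sum_affine_reindex (K : finFieldType) (V : nmodType) (f : K -> V) (a b : K) :
  a != 0 -> \sum_(x : K) f (a * x + b) = \sum_(x : K) f x.
Proof.
move=> a_neq0; rewrite [RHS](reindex_inj (_ : injective (fun x => a * x + b))) //.
by move=> x y /addIr /(mulfI a_neq0).
Qed.

Section PrimeField.
Variable p : nat.
Hypothesis p_prime : prime p.
Local Notation Fp := 'F_p.

Lemma natrFp_eq0 n : (n%:R == 0 :> Fp) = (p %| n)%N.
Proof. by rewrite (dvdn_pcharf (pchar_Fp p_prime)). Qed.

Lemma natrFp_neq0 m : (0 < m < p)%N -> m%:R != 0 :> Fp.
Proof. by case/andP=> m_gt0 m_lt; rewrite natrFp_eq0 gtnNdvd. Qed.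

Lemma natr_p_Fp : p%:R = 0 :> Fp.
Proof. by apply/eqP; rewrite natrFp_eq0. Qed.

Lemma natr_pred_p_Fp : p.-1%:R = -1 :> Fp.
Proof.
apply/eqP; rewrite -addr_eq0 -(natrD _ _ 1) addn1 prednK ?prime_gt0 //.
by rewrite natr_p_Fp.
Qed.

Lemma intrFp_eq0 (z : int) : (z%:~R == 0 :> Fp) = (p %| `|z|)%N.
Proof. by case: z => k; rewrite ?NegzE ?rmorphN ?oppr_eq0 natrFp_eq0. Qed.

Lemma pred_p_gt0 : (0 < p.-1)%N.
Proof. by rewrite -ltnS prednK ?prime_gt1 ?prime_gt0. Qed.

Lemma Fp_expr_pred (x : Fp) : x != 0 -> x ^+ p.-1 = 1.
Proof.
move=> x_neq0; apply: (mulfI x_neq0); rewrite mulr1 -exprS prednK ?prime_gt0 //.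
by have := expf_card x; rewrite card_Fp.
Qed.

Lemma Fp_prim_root : exists g : Fp, p.-1.-primitive_root g.
Proof.
have nz_card : (p.-1 <= size [seq x <- enum Fp | x != 0%R])%N.
  rewrite size_filter -(leq_add2l (count (pred1 (0 : Fp)) (enum Fp))) count_predC.
  rewrite (count_uniq_mem 0 (enum_uniq Fp)) mem_enum inE -cardE card_Fp //.
  by rewrite add1n prednK ?prime_gt0.
have /hasP[g _ ?] : has p.-1.-primitive_root [seq x <- enum Fp | x != 0%R].
  apply: has_prim_root pred_p_gt0 _ (filter_uniq _ (enum_uniq Fp)) nz_card.
  by apply/allP => x; rewrite mem_filter unity_rootE => /andP[/Fp_expr_pred ->].
by exists g.
Qed.

(* Multiplying by a generator [g] permutes ['F_p] and scales the sum by [g ^+ j != 1]. *)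
Lemma sum_expr_Fp j :
  \sum_(x : Fp) x ^+ j = if (0 < j)%N && (p.-1 %| j)%N then -1 else 0.
Proof.
case: j => [|j] /=.
  rewrite (eq_bigr (fun=> 1)) => [|x _]; last by rewrite expr0.
  by rewrite sumr_const card_Fp ?natr_p_Fp.
case: ifP => [p_dvd | p_ndvd].
  rewrite (bigD1 0) //= expr0n add0r (eq_bigr (fun=> 1)) => [|x x_neq0].
    by rewrite sumr_const cardC1 card_Fp ?natr_pred_p_Fp.
  by case/dvdnP: p_dvd => k ->; rewrite mulnC exprM Fp_expr_pred // expr1n.
have [g g_prim] := Fp_prim_root.
have g_neq0 : g != 0.
  apply/eqP => g_eq0; have := prim_expr_order g_prim.
  by rewrite g_eq0 expr0n eqn0Ngt pred_p_gt0 => /esym/eqP; rewrite oner_eq0.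
have gj_neq1 : g ^+ j.+1 != 1.
  by rewrite -(prim_order_dvd g_prim) p_ndvd.
have : \sum_(x : Fp) x ^+ j.+1 = g ^+ j.+1 * \sum_(x : Fp) x ^+ j.+1.
  rewrite mulr_sumr -(sum_affine_reindex _ 0 g_neq0).
  by apply: eq_bigr => x _; rewrite addr0 exprMn.
move/eqP; rewrite -subr_eq0 -{1}[X in X - _]mul1r -mulrBl mulf_eq0 subr_eq0.
by rewrite eq_sym (negPf gj_neq1) => /eqP.
Qed.

(* Only [x ^+ p.-1] has a nonzero sum below degree [2 (p - 1)]. *)
Lemma sum_horner_Fp (q : {poly Fp}) : (size q <= p.-1.*2)%N ->
  \sum_(x : Fp) q.[x] = - q`_p.-1.
Proof.
move=> size_q; under eq_bigr do rewrite horner_coef.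
rewrite exchange_big /=.
under eq_bigr => i _ do rewrite -mulr_sumr sum_expr_Fp.
have only_pred_p (i : 'I_(size q)) : (0 < i)%N && (p.-1 %| i)%N = (i == p.-1 :> nat).
  case: eqP => [->|i_neq]; first by rewrite pred_p_gt0 dvdnn.
  apply/negbTE/andP => -[i_gt0 /dvdnP[[|[|k]] i_eq]]; rewrite i_eq in i_gt0 i_neq.
  - by rewrite mul0n in i_gt0.
  - by rewrite mul1n in i_neq.
  - by move: (leq_trans (ltn_ord i) size_q); rewrite i_eq -mul2n ltn_pmul2r ?pred_p_gt0.
rewrite (eq_bigr (fun i : 'I_(size q) => if i == p.-1 :> nat then - q`_p.-1 else 0)).
  rewrite -big_mkcond (big_ord1_eq _ (fun=> - q`_p.-1)).
  by case: ltnP => // /(nth_default 0) ->; rewrite oppr0.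
by move=> i _; rewrite only_pred_p; case: eqP => [->|_]; rewrite ?mulrN1 ?mulr0.
Qed.

Lemma sum_nat_Fp (V : nmodType) (G : Fp -> V) :
  \sum_(0 <= x < p) G x%:R = \sum_(x : Fp) G x.
Proof.
rewrite big_mkord (reindex (cast_ord (esym (Fp_cast p_prime)))) /=; last first.
  by exists (cast_ord (Fp_cast p_prime)) => x _; [exact: cast_ordKV | exact: cast_ordK].
by apply: eq_bigr => x _; congr G; rewrite -[RHS]natr_Zp.
Qed.

Hypothesis p_odd : odd p.
Local Notation n := p.-1./2.

Lemma double_half_pred : n.*2 = p.-1.
Proof. by rewrite halfK -subn1 oddB ?prime_gt0 // p_odd subn0. Qed.

Lemma half_pred_gt0 : (0 < n)%N.
Proof. by rewrite -double_gt0 double_half_pred -subn1 subn_gt0 prime_gt1. Qed.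

Lemma Fp_expr_half_prim_root (g : Fp) : p.-1.-primitive_root g -> g ^+ n = -1.
Proof.
move=> g_prim; have : (g ^+ n) ^+ 2 == 1.
  by rewrite -exprM muln2 double_half_pred prim_expr_order.
rewrite sqrf_eq1 -(prim_order_dvd g_prim) => /orP[/(dvdn_leq half_pred_gt0)|/eqP //].
by have := double_half_pred; have := half_pred_gt0; rewrite -addnn; lia.
Qed.

Lemma legendre_int_Fp (m : int) : (legendre_int p m)%:~R = (m%:~R : Fp) ^+ n.
Proof.
rewrite /legendre_int dvdzE absz_nat -intrFp_eq0.
have [->|m_neq0] /= := eqVneq (m%:~R : Fp) 0.
  by rewrite expr0n gtn_eqF ?half_pred_gt0.
case: existsP => [[x] | no_root].
  rewrite dvdzE absz_nat -intrFp_eq0 rmorphB rmorphXn /= subr_eq0 -pmulrn => /eqP m_eq.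
  rewrite -m_eq -exprM mul2n double_half_pred Fp_expr_pred //.
  by apply: contraNneq m_neq0 => x_eq0; rewrite -m_eq x_eq0 expr0n.
have [g g_prim] := Fp_prim_root.
have [i m_eq] := prim_rootP g_prim (Fp_expr_pred m_neq0).
rewrite m_eq -exprM mulnC exprM Fp_expr_half_prim_root // -signr_odd.
case: (boolP (odd i)) => [_|i_even]; first by rewrite expr1.
have y_lt : (g ^+ i./2 < p)%N.
  by have := ltn_ord (g ^+ i./2); rewrite [X in (_ < X)%N -> _]Fp_cast.
case: no_root; exists (Ordinal y_lt).
rewrite dvdzE absz_nat -intrFp_eq0 rmorphB rmorphXn /= subr_eq0 -pmulrn natr_Zp.
by rewrite m_eq -exprM muln2 -[X in _ == g ^+ X](odd_double_half i) (negPf i_even).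
Qed.

(* [X^n q^n] has degree at most [3n < 2 (p - 1)] and its [X^(p-1)]-coefficient is
   the [X^n]-coefficient of [q^n]. *)
Lemma sum_mul_horner_exp_half (q : {poly Fp}) : (size q <= 3)%N ->
  \sum_(x : Fp) (x * q.[x]) ^+ n = - (q ^+ n)`_n.
Proof.
move=> size_q.
under eq_bigr do rewrite exprMn -hornerXn -horner_exp -hornerM.
rewrite sum_horner_Fp; last first.
  have size_qn := size_poly_exp_leq q n.
  have size_q1 : ((size q).-1 * n <= 2 * n)%N by rewrite leq_mul2r; apply/orP; right; lia.
  apply: leq_trans (size_polyMleq _ _) _; rewrite size_polyXn addSn /=.
  rewrite -[in X in (_ <= X)%N]double_half_pred -!addnn -addnA leq_add2l.
  by apply: leq_trans size_qn _; have := half_pred_gt0; lia.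
have pred_sub_half : (p.-1 - n = n)%N by rewrite -{1}double_half_pred -addnn addnK.
by rewrite coefXnM ltnNge -{1}pred_sub_half leq_subr pred_sub_half.
Qed.

End PrimeField.

(* [a] lies in Z_p and [y] is its residue; [in_Zp] rules out the junk value
   that [ratr] takes in ['F_p] when [p] divides the denominator. *)
Definition reduces_to (p : nat) (a : rat) (y : 'F_p) := in_Zp p a /\ ratr a = y.

Section ReductionModp.
Variable p : nat.
Hypothesis p_prime : prime p.
Local Notation redp := (@reduces_to p).

Lemma in_ZpE a : in_Zp p a = ~~ (p %| `|denq a|)%N.
Proof. by rewrite /in_Zp coprime_sym prime_coprime. Qed.

Lemma denqFp_neq0 a : in_Zp p a -> (denq a)%:~R != 0 :> 'F_p.
Proof. by rewrite (intrFp_eq0 p_prime) in_ZpE. Qed.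

Lemma reduces_frac (m d : int) : ~~ (p %| `|d|)%N -> redp (m%:~R / d%:~R) (m%:~R / d%:~R).
Proof.
case: (divqP m d) => [_|k x k_neq0]; first by rewrite dvdn0.
rewrite abszM Euclid_dvdM // negb_or => /andP[p_ndvd_k p_ndvd_x].
split; first by rewrite in_ZpE.
have kFp_neq0 : (k%:~R : 'F_p) != 0 by rewrite (intrFp_eq0 p_prime).
by rewrite /ratr !rmorphM /= invfM mulrACA mulfV ?mul1r.
Qed.

Lemma reduces_int (z : int) : redp z%:~R z%:~R.
Proof. by split; [rewrite /in_Zp denq_int coprime1n | rewrite ratr_int]. Qed.

Lemma reduces_nat n : redp n%:R n%:R.
Proof. by have := reduces_int n; rewrite -!pmulrn. Qed.

Lemma reduces_eq_frac (m d : int) a : ~~ (p %| `|d|)%N ->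
  a = m%:~R / d%:~R -> redp a (m%:~R / d%:~R).
Proof. by move=> ? ->; apply: reduces_frac. Qed.

Lemma reduces_add a b y z : redp a y -> redp b z -> redp (a + b) (y + z).
Proof.
move=> [a_in <-] [b_in <-].
have [da_neq0 db_neq0] := (denqFp_neq0 a_in, denqFp_neq0 b_in).
have p_ndvd : ~~ (p %| `|(denq a * denq b)%R|)%N.
  by rewrite abszM Euclid_dvdM // negb_or -!in_ZpE a_in b_in.
have [] := reduces_eq_frac (m := numq a * denq b + numq b * denq a) (a := a + b) p_ndvd.
  rewrite -{1}(divq_num_den a) -{1}(divq_num_den b) !rmorphD !rmorphM /=.
  by field; rewrite !intr_eq0 !denq_neq0.
move=> ? ab_eq; split=> //; rewrite ab_eq /ratr !rmorphD !rmorphM /=.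
by field; rewrite da_neq0 db_neq0.
Qed.

Lemma reduces_mul a b y z : redp a y -> redp b z -> redp (a * b) (y * z).
Proof.
move=> [a_in <-] [b_in <-].
have [da_neq0 db_neq0] := (denqFp_neq0 a_in, denqFp_neq0 b_in).
have p_ndvd : ~~ (p %| `|(denq a * denq b)%R|)%N.
  by rewrite abszM Euclid_dvdM // negb_or -!in_ZpE a_in b_in.
have [] := reduces_eq_frac (m := numq a * numq b) (a := a * b) p_ndvd.
  rewrite -{1}(divq_num_den a) -{1}(divq_num_den b) !rmorphM /=.
  by field; rewrite !intr_eq0 !denq_neq0.
move=> ? ab_eq; split=> //; rewrite ab_eq /ratr !rmorphM /=.
by field; rewrite da_neq0 db_neq0.
Qed.

Lemma reduces_opp a y : redp a y -> redp (- a) (- y).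
Proof. by move/(reduces_mul (reduces_int (-1))); rewrite !rmorphN1 !mulN1r. Qed.

Lemma reduces_exp a y n : redp a y -> redp (a ^+ n) (y ^+ n).
Proof.
move=> red_a; elim: n => [|n IHn]; first exact: (reduces_nat 1).
by rewrite !exprS; apply: reduces_mul.
Qed.

Lemma reduces_inv a y : redp a y -> y != 0 -> redp a^-1 y^-1.
Proof.
move=> [a_in <-] a_neq0; rewrite in_ZpE in a_in.
have p_ndvd_num : ~~ (p %| `|numq a|)%N.
  by apply: contra a_neq0; rewrite -(intrFp_eq0 p_prime) /ratr => /eqP ->; rewrite mul0r.
by rewrite -{1}(divq_num_den a) invf_div /ratr invf_div; apply: reduces_frac.
Qed.

Lemma reduces_sum (I : Type) (r : seq I) (P : pred I) (f : I -> rat) (g : I -> 'F_p) :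
  (forall i, P i -> redp (f i) (g i)) ->
  redp (\sum_(i <- r | P i) f i) (\sum_(i <- r | P i) g i).
Proof.
by move=> red_fg; apply: (big_ind2 redp (reduces_nat 0)) => // *; apply: reduces_add.
Qed.

(* The numerator of [a - b] vanishes in ['F_p], so [p] divides it. *)
Lemma congp_reduces a b y : redp a y -> redp b y -> congp p a b.
Proof.
move=> red_a red_b.
have := reduces_add red_a (reduces_opp red_b); rewrite subrr => -[c_in c_red0].
rewrite /congp; move: (a - b) c_in c_red0 => c c_in c_red0.
have p_dvd_num : (p%:Z %| numq c)%Z.
  move: c_red0; rewrite dvdzE -(intrFp_eq0 p_prime) /ratr => /eqP.
  by rewrite mulf_eq0 invr_eq0 (negPf (denqFp_neq0 c_in)) orbF.
have -> : c / p%:R = (numq c %/ p)%Z%:~R / (denq c)%:~R.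
  rewrite -{1}(divq_num_den c) -{1}(divzK p_dvd_num) rmorphM /= -pmulrn.
  by field; rewrite pnatr_eq0 -lt0n prime_gt0 // intr_eq0 denq_neq0.
by case: (@reduces_frac (numq c %/ p)%Z (denq c)); rewrite -?in_ZpE.
Qed.

Hypothesis p_odd : odd p.

Lemma reduces_legendre a y : redp a y -> redp (legendre p a)%:~R (y ^+ p.-1./2).
Proof.
move=> [a_in <-]; split; first by case: (reduces_int (legendre p a)).
rewrite ratr_int /legendre (legendre_int_Fp p_prime) // rmorphM rmorphXn /= /ratr.
congr ((_ * _) ^+ _); apply: (mulfI (denqFp_neq0 a_in)); rewrite mulfV ?denqFp_neq0 //.
by rewrite -exprS -subSn ?prime_gt1 // subSS subn1 (Fp_expr_pred p_prime) ?denqFp_neq0.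
Qed.

End ReductionModp.

Section LegendreModp.
Variable p : nat.
Hypothesis p_prime : prime p.
Hypothesis p_gt3 : (3 < p)%N.
Local Notation Fp := 'F_p.
Local Notation n := p.-1./2.

Lemma p_odd : odd p.
Proof. by case: (even_prime p_prime) p_gt3 => // ->. Qed.

Lemma two_Fp_neq0 : 2 != 0 :> Fp.
Proof. by rewrite natrFp_neq0 // (ltn_trans _ p_gt3). Qed.

Lemma three_Fp_neq0 : 3 != 0 :> Fp.
Proof. by rewrite natrFp_neq0 // p_gt3. Qed.

Lemma natr32_Fp_neq0 : 32 != 0 :> Fp.
Proof. by rewrite [32](_ : _ = 2 ^+ 5) ?expf_neq0 ?two_Fp_neq0 // -natrX. Qed.

Lemma sum_cubic_scaled_legendre (T : Fp) :
  \sum_(v : Fp) (v * ((v + T) ^+ 2 - 1)) ^+ n = - scaled_legendreP n T.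
Proof.
transitivity (\sum_(v : Fp) (v * (('X + T%:P) ^+ 2 - 1).[v]) ^+ n).
  by apply: eq_bigr => v _; rewrite !hornerE.
rewrite sum_mul_horner_exp_half ?coef_XaddC_sqr_sub1_exp ?p_odd //.
rewrite (leq_trans (size_polyD _ _)) // geq_max size_polyN size_poly1 andbT.
by rewrite (leq_trans (size_poly_exp_leq _ _)) // size_XaddC.
Qed.

Lemma sum_cubic_binom_sqr (l : Fp) :
  \sum_(w : Fp) (w * ((w - 1) * (w - l))) ^+ n = - ((-1) ^+ n * binom_sqr_sum n l).
Proof.
transitivity (\sum_(w : Fp) (w * (('X - 1) * ('X - l%:P)).[w]) ^+ n).
  by apply: eq_bigr => w _; rewrite !hornerE.
rewrite sum_mul_horner_exp_half ?p_odd ?coef_XsubC_XsubC_exp //.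
by rewrite (leq_trans (size_polyMleq _ _)) // -polyC1 !size_XsubC.
Qed.

(* The substitution [v = -2 w + (1 - T)] sends the roots [1 - T, 0, -1 - T]
   of the left-hand cubic to [0, (1 - T) / 2, 1]. *)
Lemma sum_cubic_shift (T : Fp) :
  \sum_(v : Fp) (v * ((v + T) ^+ 2 - 1)) ^+ n =
  (-8) ^+ n * \sum_(w : Fp) (w * ((w - 1) * (w - (1 - T) / 2))) ^+ n.
Proof.
rewrite -(sum_affine_reindex _ (1 - T) (_ : -2 != 0)) ?oppr_eq0 ?two_Fp_neq0 //.
rewrite mulr_sumr; apply: eq_bigr => w _; rewrite -exprMn; congr (_ ^+ _).
by field; rewrite two_Fp_neq0.
Qed.

Lemma binom_half_central k : (k <= n)%N -> 'C(n, k)%:R * (-4) ^+ k = 'C(k.*2, k)%:R :> Fp.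
Proof.
elim: k => [|k IHk] k_lt; first by rewrite !bin0 mulr1.
have twice_n1 : 2 * n%:R + 1 = 0 :> Fp.
  rewrite -natrM -(natrD _ _ 1) mul2n double_half_pred ?p_odd // addn1 prednK ?prime_gt0 //.
  exact: natr_p_Fp.
have k1_neq0 : k.+1%:R != 0 :> Fp.
  by apply: natrFp_neq0; have := double_half_pred p_prime p_odd; lia.
apply: (mulfI k1_neq0); rewrite mulrA -natrM mul_bin_left -natrM mul_bin_central exprS.
rewrite natrM -mulrA [_%:R * (-4 * _)]mulrCA (IHk (ltnW k_lt)) (natrB _ (ltnW k_lt)).
rewrite -mul2n !natrM -[(2 * k).+1%:R]natr1 natrM.
have -> : 2 * (2 * k%:R + 1) = (n%:R - k%:R) * -4 + 2 * (2 * n%:R + 1) :> Fp by ring.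
by rewrite twice_n1 mulr0 addr0 mulrA.
Qed.

Lemma binom_sqr_sum_central (T : Fp) :
  binom_sqr_sum n ((1 - T) / 2) = central_sqr_sum n ((1 - T) / 32).
Proof.
rewrite /central_sqr_sum big_mkord; apply: eq_bigr => k k_lt.
have k_le : (k <= n)%N by rewrite -ltnS.
rewrite mul2n !natrX -(binom_half_central k_le).
have scale_16 : (-4 : Fp) ^+ k ^+ 2 * ((1 - T) / 32) ^+ k = ((1 - T) / 2) ^+ k.
  rewrite -exprM mulnC exprM -exprMn; congr (_ ^+ _).
  by field; rewrite two_Fp_neq0 natr32_Fp_neq0.
by rewrite [in RHS]exprMn -[in RHS]mulrA scale_16.
Qed.

Lemma scaled_legendre_central (T : Fp) :
  (2 ^+ n)^-1 * scaled_legendreP n T = central_sqr_sum n ((1 - T) / 32).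
Proof.
have := sum_cubic_scaled_legendre T.
rewrite sum_cubic_shift sum_cubic_binom_sqr binom_sqr_sum_central.
rewrite mulrN mulrA -exprMn => /oppr_inj <-; rewrite mulrA -exprVn -exprMn.
have -> : 2^-1 * (-8 * -1) = 2 ^+ 2 :> Fp by field; rewrite two_Fp_neq0.
by rewrite -exprM mul2n double_half_pred ?p_odd // Fp_expr_pred ?mul1r ?two_Fp_neq0.
Qed.

(* The substitution [x = -3 v - 2 T] turns [cubic_of T x] into [-27 v ((v + T)^2 - 1)]. *)
Lemma sum_cubic_scale (T : Fp) :
  \sum_(x : Fp) cubic_of T x ^+ n =
  (-27) ^+ n * \sum_(v : Fp) (v * ((v + T) ^+ 2 - 1)) ^+ n.
Proof.
rewrite -(sum_affine_reindex _ (- (2 * T)) (_ : -3 != 0)) ?oppr_eq0 ?three_Fp_neq0 //.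
by rewrite mulr_sumr; apply: eq_bigr => v _; rewrite /cubic_of -exprMn; congr (_ ^+ _); ring.
Qed.

Lemma cubic_character_sum_legendre (T : Fp) :
  - ((-6) ^+ n * \sum_(x : Fp) cubic_of T x ^+ n) =
  (2 ^+ n)^-1 * scaled_legendreP n T.
Proof.
rewrite sum_cubic_scale sum_cubic_scaled_legendre !mulrN opprK mulrA.
congr (_ * _); rewrite -exprMn; apply: (mulIf (expf_neq0 n two_Fp_neq0)).
rewrite mulVf ?expf_neq0 ?two_Fp_neq0 // -exprMn (_ : -6 * -27 * 2 = 18 ^+ 2); last by ring.
rewrite -exprM mul2n.
rewrite double_half_pred ?p_odd // Fp_expr_pred //.
by rewrite (_ : 18 = 2 * 3 * 3) ?mulf_neq0 ?two_Fp_neq0 ?three_Fp_neq0 // -!natrM.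
Qed.

End LegendreModp.

Ltac reduce p_prime :=
  repeat match goal with
  | |- reduces_to (_ + _) _ => apply: (reduces_add p_prime)
  | |- reduces_to (- _) _ => apply: (reduces_opp p_prime)
  | |- reduces_to (_ * _) _ => apply: (reduces_mul p_prime)
  | |- reduces_to (_ ^+ _) _ => apply: (reduces_exp p_prime)
  | |- reduces_to (_%:R) _ => exact: reduces_nat
  | |- reduces_to 1 _ => exact: (reduces_nat _ 1)
  | |- reduces_to (legendre _ _)%:~R _ => apply: (reduces_legendre p_prime)
  | |- reduces_to (\sum_(_ <- _ | _) _) _ => apply: (reduces_sum p_prime) => ? _
  | |- reduces_to _ _ => assumption
  end.

Unset Implicit Arguments.

Theorem theorem2p11 (p : nat) (t : rat) :
  prime p -> (3 < p)%N -> in_Zp p t ->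
  congp p (legendreP p.-1./2 t)
          (\sum_(0 <= k < p.-1./2.+1) (('C(2 * k, k) ^ 2)%N)%:R * ((1 - t) / 32) ^+ k)
  /\
  congp p (\sum_(0 <= k < p.-1./2.+1) (('C(2 * k, k) ^ 2)%N)%:R * ((1 - t) / 32) ^+ k)
          (- ((legendre p (-6))%:~R
              * \sum_(0 <= x < p)
                  (legendre p (x%:R ^+ 3 - 3 * (t ^+ 2 + 3) * x%:R
                               + 2 * t * (t ^+ 2 - 9)))%:~R)).
Proof.
move=> p_prime p_gt3 t_in; set n := p.-1./2; set T : 'F_p := ratr t.
have red_t : reduces_to t T by [].
have red_legendreP : reduces_to (legendreP n t) ((2 ^+ n)^-1 * scaled_legendreP n T).
  rewrite legendreP_scaled /scaled_legendreP; reduce p_prime.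
  by apply: (reduces_inv p_prime); [reduce p_prime | rewrite expf_neq0 ?two_Fp_neq0].
have red_central :
    reduces_to (central_sqr_sum n ((1 - t) / 32)) (central_sqr_sum n ((1 - T) / 32)).
  rewrite /central_sqr_sum; reduce p_prime.
  by apply: (reduces_inv p_prime); [reduce p_prime | rewrite natr32_Fp_neq0].
have red_character :
    reduces_to (- ((legendre p (-6))%:~R * \sum_(0 <= x < p) (legendre p (cubic_of t x%:R))%:~R))
               (- ((-6) ^+ n * \sum_(x : 'F_p) cubic_of T x ^+ n)).
  rewrite -(sum_nat_Fp p_prime (fun x => cubic_of T x ^+ n)) /cubic_of.
  by reduce p_prime; apply: p_odd.
split; first by apply: (congp_reduces p_prime red_legendreP); rewrite scaled_legendre_central.
apply: (congp_reduces p_prime red_central).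
by rewrite -(scaled_legendre_central p_prime p_gt3) -(cubic_character_sum_legendre p_prime p_gt3).
Qed.
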